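(* Let $n\ge2$. For all $x,y\in\mathbb{H}^n$, $$\tfrac14\rho_{\mathbb{H}^n}(x,y)\le\tilde\tau_{\mathbb{H}^n}(x,y)\le\rho_{\mathbb{H}^n}(x,y)\quad\text{and}\quad \tilde\tau_{\mathbb{H}^n}(x,y)\le\tfrac12\rho_{\mathbb{H}^n}(x,y)+\log\tfrac54,$$ and all these inequalities are sharp: $$\inf_{x\ne y}\frac{\tilde\tau_{\mathbb{H}^n}(x,y)}{\rho_{\mathbb{H}^n}(x,y)}=\tfrac14,\qquad \sup_{x\ne y}\frac{\tilde\tau_{\mathbb{H}^n}(x,y)}{\rho_{\mathbb{H}^n}(x,y)}=1,$$ and equality $\tilde\tau_{\mathbb{H}^n}(x,y)=\tfrac12\rho_{\mathbb{H}^n}(x,y)+\log\tfrac54$ holds for $x=2e_n$, $y=\tfrac12e_n$.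
   Context: $\mathbb{H}^n=\{(x_1,\dots,x_n)\in\mathbb{R}^n:x_n>0\}$ with boundary $\{x_n=0\}$ in $\mathbb{R}^n$; $e_n$ is the $n$-th standard basis vector. The hyperbolic metric $\rho_{\mathbb{H}^n}$ is given by $\cosh\rho_{\mathbb{H}^n}(x,y)=1+\frac{|x-y|^2}{2x_ny_n}$. For a proper subdomain $D\subsetneq\mathbb{R}^n$ and $x,y\in D$, $\tilde\tau_D(x,y)=\log\big(1+\sup_{p\in\partial D}\frac{|x-y|}{\sqrt{|x-p||y-p|}}\big)$ (the scale invariant Cassinian metric). *)

From Stdlib Require Import Reals Lra ClassicalEpsilon.
Open Scope R_scope.

(* Points of R^n are functions nat -> R; only coordinates 0..n-1 are meaningful.
   Coordinate x_n of the paper is index n-1 here. *)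
Definition pt := nat -> R.

Fixpoint sumR (n : nat) (f : nat -> R) : R :=
  match n with O => 0 | S k => sumR k f + f k end.

Definition edist (n : nat) (x y : pt) : R :=
  sqrt (sumR n (fun i => (x i - y i) ^ 2)).

Definition lastc (n : nat) (x : pt) : R := x (n - 1)%nat.

Definition inH (n : nat) (x : pt) : Prop := 0 < lastc n x.
Definition inbdH (n : nat) (p : pt) : Prop := lastc n p = 0.

Definition ptneq (n : nat) (x y : pt) : Prop := exists i, (i < n)%nat /\ x i <> y i.

Definition cen (n : nat) (c : R) : pt := fun i => if Nat.eqb i (n - 1) then c else 0.

Definition arcosh (t : R) : R := ln (t + sqrt (t ^ 2 - 1)).

Definition rhoH (n : nat) (x y : pt) : R :=
  arcosh (1 + (edist n x y) ^ 2 / (2 * lastc n x * lastc n y)).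

(* supremum (least upper bound) of a set of reals, chosen classically;
   meaningful when the lub exists (it does below: the set is bounded and nonempty). *)
Definition supR (E : R -> Prop) : R :=
  epsilon (inhabits 0) (fun l => is_lub E l).

Definition is_glb (E : R -> Prop) (m : R) : Prop :=
  (forall x, E x -> m <= x) /\ (forall b, (forall x, E x -> b <= x) -> b <= m).

Definition cass_set (n : nat) (x y : pt) : R -> Prop :=
  fun t => exists p, inbdH n p /\
    t = edist n x y / sqrt (edist n x p * edist n y p).

Definition tauH (n : nat) (x y : pt) : R := ln (1 + supR (cass_set n x y)).

Definition ratio_set (n : nat) : R -> Prop :=
  fun r => exists x y, inH n x /\ inH n y /\ ptneq n x y /\ r = tauH n x y / rhoH n x y.

(* Write [u = |x - y| / sqrt (x_n y_n)], so that [cosh rho = 1 + u^2/2], i.e. [w = e^(rho/2)] is the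
   root [w >= 1] of [w^2 = u w + 1], and let [s] be the Cassinian supremum, so [tau = ln (1 + s)].
   Since [|x - p| >= x_n] on the boundary, [s <= u]; taking for [p] the foot of the lower point
   gives [(1 + s)^2 >= 1 + u].  The three inequalities then follow from [w <= 1 + u <= w^2] and
   [1 + u <= 5 w / 4].  Sharpness: for [x = e_n], [y = w^2 e_n] one gets [tau = ln (1 + w - 1/w)]
   and [rho = 2 ln w], whose ratio tends to 1 as [w -> 1]; for [x = e_n], [y = (v^2 + 1) e_1 + e_n]
   every boundary point has [|x - p| |y - p| >= v^2], so [tau <= ln (2 v)] while [rho >= 4 ln v]. *)

From Stdlib Require Import Reals Lra Lia Psatz ClassicalEpsilon.
Open Scope R_scope.

Lemma ln_le (x y : R) : 0 < x -> x <= y -> ln x <= ln y.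
Proof.
  intros hx [hxy | ->]; [left; exact (ln_increasing x y hx hxy) | lra].
Qed.

Lemma ln_pos (x : R) : 1 < x -> 0 < ln x.
Proof. intros hx. rewrite <- ln_1. apply ln_increasing; lra. Qed.

Lemma ln_le_sub1 (x : R) : 0 < x -> ln x <= x - 1.
Proof. intros hx. pose proof (exp_ineq1_le (ln x)) as h. rewrite exp_ln in h by exact hx. lra. Qed.

Lemma ln_ge_div (z : R) : 0 < z -> z / (1 + z) <= ln (1 + z).
Proof.
  intros hz. pose proof (ln_le_sub1 (/ (1 + z)) ltac:(apply Rinv_0_lt_compat; lra)) as h.
  rewrite ln_Rinv in h by lra.
  replace (z / (1 + z)) with (1 - / (1 + z)) by (field; lra). lra.
Qed.

Lemma sumR_ext n f g : (forall i, (i < n)%nat -> f i = g i) -> sumR n f = sumR n g.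
Proof.
  induction n as [|n IH]; intros hfg; simpl; [reflexivity|].
  rewrite IH, hfg by first [lia | intros; apply hfg; lia]. reflexivity.
Qed.

Lemma sumR_nonneg n f : (forall i, 0 <= f i) -> 0 <= sumR n f.
Proof. intros hf. induction n as [|n IH]; simpl; [lra|]. pose proof (hf n). lra. Qed.

Lemma sumR_eq0 n f : (forall i, (i < n)%nat -> f i = 0) -> sumR n f = 0.
Proof.
  induction n as [|n IH]; intros hf; simpl; [reflexivity|].
  rewrite IH, hf by first [lia | intros; apply hf; lia]. ring.
Qed.

Lemma sumR_eq_term n f k : (k < n)%nat ->
  (forall i, (i < n)%nat -> i <> k -> f i = 0) -> sumR n f = f k.
Proof.
  induction n as [|n IH]; intros hk hf; simpl; [lia|].
  destruct (Nat.eq_dec k n) as [-> | hkn].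
  - rewrite sumR_eq0 by (intros; apply hf; lia). ring.
  - rewrite IH, (hf n) by first [lia | intros; apply hf; lia]. ring.
Qed.

Lemma sumR_ge_term n f k : (forall i, 0 <= f i) -> (k < n)%nat -> f k <= sumR n f.
Proof.
  induction n as [|n IH]; intros hf hk; simpl; [lia|].
  destruct (Nat.eq_dec k n) as [-> | hkn].
  - pose proof (sumR_nonneg n f hf). lra.
  - pose proof (IH hf ltac:(lia)). pose proof (hf n). lra.
Qed.

Lemma sumR_pred n f : (1 <= n)%nat -> sumR n f = sumR (n - 1) f + f (n - 1)%nat.
Proof. intros hn. destruct n as [|n]; [lia|]. simpl. rewrite Nat.sub_0_r. reflexivity. Qed.

Lemma sqr_diff_nonneg (x y : pt) i : 0 <= (x i - y i) ^ 2.
Proof. apply pow2_ge_0. Qed.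

Lemma edist_sym n x y : edist n x y = edist n y x.
Proof. unfold edist. f_equal. apply sumR_ext. intros. ring. Qed.

Lemma edist_sqr n x y : edist n x y * edist n x y = sumR n (fun i => (x i - y i) ^ 2).
Proof. apply sqrt_sqrt, sumR_nonneg, sqr_diff_nonneg. Qed.

Lemma sqr_le_edist_sqr n x p j : (j < n)%nat -> (x j - p j) ^ 2 <= edist n x p * edist n x p.
Proof. intros hj. rewrite edist_sqr. apply (sumR_ge_term n _ j (sqr_diff_nonneg x p) hj). Qed.

Lemma edist_pos n x y : ptneq n x y -> 0 < edist n x y.
Proof.
  intros [i [hi hxy]]. pose proof (sqr_le_edist_sqr n x y i hi).
  assert (0 < (x i - y i) ^ 2) by (rewrite <- Rsqr_pow2; apply Rsqr_pos_lt; lra).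
  pose proof (sqrt_pos (sumR n (fun i => (x i - y i) ^ 2))). fold (edist n x y) in *. nra.
Qed.

Lemma lastc_le_edist_bd n x p : (1 <= n)%nat -> 0 <= lastc n x -> inbdH n p ->
  lastc n x <= edist n x p.
Proof.
  intros hn hx hp. unfold inbdH, lastc in *.
  pose proof (sqr_le_edist_sqr n x p (n - 1) ltac:(lia)) as h.
  rewrite hp, Rminus_0_r in h.
  pose proof (sqrt_pos (sumR n (fun i => (x i - p i) ^ 2))). fold (edist n x p) in *. nra.
Qed.

Lemma lastc_cen n c : lastc n (cen n c) = c.
Proof. unfold lastc, cen. rewrite Nat.eqb_refl. reflexivity. Qed.

Lemma edist_cen n a b : (1 <= n)%nat -> edist n (cen n a) (cen n b) = Rabs (a - b).
Proof.
  intros hn. unfold edist.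
  rewrite (sumR_eq_term n _ (n - 1)%nat) by
    (lia || (intros i _ hi; unfold cen; apply Nat.eqb_neq in hi; rewrite hi; ring)).
  unfold cen. rewrite Nat.eqb_refl, <- pow2_abs. apply sqrt_pow2, Rabs_pos.
Qed.

Definition hyp_ratio (n : nat) (x y : pt) : R := edist n x y / sqrt (lastc n x * lastc n y).

Lemma hyp_ratio_nonneg n x y : inH n x -> inH n y -> 0 <= hyp_ratio n x y.
Proof.
  unfold inH, hyp_ratio. intros hx hy. apply Rle_mult_inv_pos.
  - apply sqrt_pos.
  - apply sqrt_lt_R0. nra.
Qed.

Lemma hyp_ratio_pos n x y : inH n x -> inH n y -> ptneq n x y -> 0 < hyp_ratio n x y.
Proof.
  unfold inH, hyp_ratio. intros hx hy hxy. apply Rdiv_lt_0_compat.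
  - exact (edist_pos n x y hxy).
  - apply sqrt_lt_R0. nra.
Qed.

Lemma exists_root_ge1 (u : R) : 0 <= u -> exists w, 1 <= w /\ w * w = u * w + 1.
Proof.
  intros hu. set (s := sqrt (u ^ 2 + 4)).
  assert (hs : s * s = u ^ 2 + 4) by (apply sqrt_sqrt; nra).
  assert (hs2 : 2 <= s) by (rewrite <- (sqrt_pow2 2) by lra; apply sqrt_le_1_alt; nra).
  exists ((u + s) / 2). split; nra.
Qed.

(* With [u = w - 1/w], [1 + u^2/2 = (w^2 + w^-2)/2] and its [arcosh] is [ln (w^2)]. *)
Lemma arcosh_half_sqr (u w : R) : 0 <= u -> 0 < w -> w * w = u * w + 1 ->
  arcosh (1 + u ^ 2 / 2) = 2 * ln w.
Proof.
  intros hu hw hwu.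
  assert (hu_w : u = w - / w) by (apply Rmult_eq_reg_r with w; [field_simplify; nra | lra]).
  assert (hiw : 0 < / w) by (apply Rinv_0_lt_compat; exact hw).
  unfold arcosh.
  rewrite (sqrt_lem_1 _ (u * (w + / w) / 2)) by (nra || (rewrite hu_w; field; lra)).
  replace (1 + u ^ 2 / 2 + u * (w + / w) / 2) with (w * w) by (rewrite hu_w; field; lra).
  rewrite ln_mult by exact hw. ring.
Qed.

Lemma rhoH_eq_ln n x y w : inH n x -> inH n y -> 0 < w ->
  w * w = hyp_ratio n x y * w + 1 -> rhoH n x y = 2 * ln w.
Proof.
  intros hx hy hw hwu. rewrite <- (arcosh_half_sqr (hyp_ratio n x y) w) by
    (exact (hyp_ratio_nonneg n x y hx hy) || assumption).
  unfold rhoH, inH, hyp_ratio in *. do 2 f_equal.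
  assert (hs : sqrt (lastc n x * lastc n y) * sqrt (lastc n x * lastc n y) = lastc n x * lastc n y)
    by (apply sqrt_sqrt; nra).
  assert (0 < sqrt (lastc n x * lastc n y)) by (apply sqrt_lt_R0; nra).
  set (q := sqrt (lastc n x * lastc n y)) in *.
  replace (2 * lastc n x * lastc n y) with (2 * (q * q)) by (rewrite hs; ring).
  field. lra.
Qed.

Lemma rhoH_pos n x y : inH n x -> inH n y -> ptneq n x y -> 0 < rhoH n x y.
Proof.
  intros hx hy hxy. pose proof (hyp_ratio_pos n x y hx hy hxy) as hu.
  destruct (exists_root_ge1 _ (Rlt_le _ _ hu)) as [w [hw hwu]].
  rewrite (rhoH_eq_ln n x y w) by (assumption || lra).
  assert (1 < w) by nra.
  pose proof (ln_pos w ltac:(lra)). lra.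
Qed.

Lemma hyp_ratio_sym n x y : hyp_ratio n x y = hyp_ratio n y x.
Proof. unfold hyp_ratio. rewrite edist_sym, Rmult_comm. reflexivity. Qed.

Lemma cass_set_sym n x y e : cass_set n x y e -> cass_set n y x e.
Proof.
  intros [p [hp ->]]. exists p. split; [exact hp|]. rewrite edist_sym, Rmult_comm. reflexivity.
Qed.

Lemma cass_le_hyp_ratio n x y e : (1 <= n)%nat -> inH n x -> inH n y ->
  cass_set n x y e -> e <= hyp_ratio n x y.
Proof.
  intros hn hx hy [p [hp ->]]. unfold hyp_ratio, inH in *.
  pose proof (lastc_le_edist_bd n x p hn ltac:(lra) hp).
  pose proof (lastc_le_edist_bd n y p hn ltac:(lra) hp).
  apply Rmult_le_compat_l; [apply sqrt_pos|].
  apply Rinv_le_contravar; [apply sqrt_lt_R0; nra|].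
  apply sqrt_le_1_alt, Rmult_le_compat; lra.
Qed.

(* Here [a], [b] are the heights of the two points, [t] their distance and [r] the distance from
   the higher point to the foot of the lower one, so that [b <= r <= t + b]. *)
Lemma foot_ratio_bound (a b r t : R) : 0 < a -> a <= b -> b <= r -> r <= t + b -> 0 <= t ->
  1 + t / sqrt (a * b) <= (1 + t / sqrt (a * r)) ^ 2.
Proof.
  intros ha hab hbr hrt ht.
  rewrite !sqrt_mult by lra.
  set (sa := sqrt a). set (sb := sqrt b). set (sr := sqrt r).
  assert (hsa : 0 < sa) by (apply sqrt_lt_R0; lra).
  assert (hsb : 0 < sb) by (apply sqrt_lt_R0; lra).
  assert (hsr : 0 < sr) by (apply sqrt_lt_R0; lra).
  assert (hsa2 : sa * sa = a) by (apply sqrt_sqrt; lra).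
  assert (hsb2 : sb * sb = b) by (apply sqrt_sqrt; lra).
  assert (hsr2 : sr * sr = r) by (apply sqrt_sqrt; lra).
  assert (hsab : sa <= sb) by (apply sqrt_le_1_alt; lra).
  assert (hsbr : sb <= sr) by (apply sqrt_le_1_alt; lra).
  assert (key : sa * (sr * sr) <= t * sb + 2 * sa * sr * sb).
  { rewrite hsr2.
    assert (sa * t <= sb * t) by nra.
    assert (sa * b <= 2 * sa * sr * sb).
    { rewrite <- hsb2.
      pose proof (Rmult_le_pos (sa * sb) (2 * sr - sb) ltac:(nra) ltac:(lra)). nra. }
    nra. }
  apply Rmult_le_reg_r with (sa * sa * sr * sr * sb); [repeat apply Rmult_lt_0_compat; lra|].
  replace ((1 + t / (sa * sb)) * (sa * sa * sr * sr * sb))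
    with (sa * sa * sr * sr * sb + t * sa * sr * sr) by (field; lra).
  replace ((1 + t / (sa * sr)) ^ 2 * (sa * sa * sr * sr * sb))
    with (sa * sa * sr * sr * sb + t * (t * sb + 2 * sa * sr * sb)) by (field; lra).
  nra.
Qed.

Definition foot (n : nat) (x : pt) : pt := fun i => if Nat.eqb i (n - 1) then 0 else x i.

Lemma foot_inbdH n x : inbdH n (foot n x).
Proof. unfold inbdH, lastc, foot. rewrite Nat.eqb_refl. reflexivity. Qed.

Lemma edist_foot n x : (1 <= n)%nat -> 0 <= lastc n x -> edist n x (foot n x) = lastc n x.
Proof.
  intros hn hx. unfold edist.
  rewrite (sumR_eq_term n _ (n - 1)%nat) by
    (lia || (intros i _ hi; unfold foot; apply Nat.eqb_neq in hi; rewrite hi; ring)).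
  unfold foot. rewrite Nat.eqb_refl, Rminus_0_r. apply sqrt_pow2, hx.
Qed.

Lemma edist_foot_sqr n x y : (1 <= n)%nat ->
  edist n y (foot n x) * edist n y (foot n x) =
  sumR (n - 1) (fun i => (x i - y i) ^ 2) + lastc n y ^ 2.
Proof.
  intros hn. rewrite edist_sqr, sumR_pred by exact hn. unfold foot, lastc.
  rewrite Nat.eqb_refl. f_equal; [apply sumR_ext; intros i hi|ring].
  replace (Nat.eqb i (n - 1)) with false by (symmetry; apply Nat.eqb_neq; lia). ring.
Qed.

Lemma cass_foot_witness n x y : (1 <= n)%nat -> inH n x -> inH n y -> lastc n x <= lastc n y ->
  exists e, cass_set n x y e /\ 0 <= e /\ 1 + hyp_ratio n x y <= (1 + e) ^ 2.
Proof.
  intros hn hx hy hab. unfold inH in *.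
  pose proof (edist_foot n x hn ltac:(lra)) as hxp.
  set (a := lastc n x) in *. set (b := lastc n y) in *.
  set (t := edist n x y). set (r := edist n y (foot n x)).
  set (h := sumR (n - 1) (fun i => (x i - y i) ^ 2)).
  assert (hh : 0 <= h) by apply sumR_nonneg, sqr_diff_nonneg.
  assert (ht : t * t = h + (a - b) ^ 2)
    by (unfold t; rewrite edist_sqr, sumR_pred by exact hn; reflexivity).
  assert (hr : r * r = h + b ^ 2) by exact (edist_foot_sqr n x y hn).
  assert (ht0 : 0 <= t) by apply sqrt_pos.
  assert (hr0 : 0 <= r) by apply sqrt_pos.
  assert (hbr : b <= r) by nra.
  assert (hrt : r <= t + b) by nra.
  exists (t / sqrt (edist n x (foot n x) * r)). repeat split.
  - exists (foot n x). split; [apply foot_inbdH | reflexivity].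
  - rewrite hxp. apply Rle_mult_inv_pos; [exact ht0|].
    apply sqrt_lt_R0, Rmult_lt_0_compat; lra.
  - rewrite hxp. apply foot_ratio_bound; assumption.
Qed.

Lemma cass_witness n x y : (1 <= n)%nat -> inH n x -> inH n y ->
  exists e, cass_set n x y e /\ 0 <= e /\ 1 + hyp_ratio n x y <= (1 + e) ^ 2.
Proof.
  intros hn hx hy. destruct (Rle_dec (lastc n x) (lastc n y)) as [hxy | hxy].
  - exact (cass_foot_witness n x y hn hx hy hxy).
  - destruct (cass_foot_witness n y x hn hy hx ltac:(lra)) as [e [he1 he2]].
    exists e. rewrite hyp_ratio_sym. exact (conj (cass_set_sym n y x e he1) he2).
Qed.

Lemma cass_set_lub n x y : (1 <= n)%nat -> inH n x -> inH n y ->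
  is_lub (cass_set n x y) (supR (cass_set n x y)).
Proof.
  intros hn hx hy. unfold supR. apply epsilon_spec.
  destruct (completeness (cass_set n x y)) as [m hm]; [| |exists m; exact hm].
  - exists (hyp_ratio n x y). intros e he. exact (cass_le_hyp_ratio n x y e hn hx hy he).
  - destruct (cass_witness n x y hn hx hy) as [e [he _]]. exists e. exact he.
Qed.

Lemma cass_sup_bounds n x y : (1 <= n)%nat -> inH n x -> inH n y ->
  0 <= supR (cass_set n x y) /\ supR (cass_set n x y) <= hyp_ratio n x y /\
  1 + hyp_ratio n x y <= (1 + supR (cass_set n x y)) ^ 2.
Proof.
  intros hn hx hy. destruct (cass_set_lub n x y hn hx hy) as [hub hleast].
  destruct (cass_witness n x y hn hx hy) as [e [he [he0 heu]]].
  pose proof (hub e he).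
  assert (supR (cass_set n x y) <= hyp_ratio n x y)
    by (apply hleast; intros z hz; exact (cass_le_hyp_ratio n x y z hn hx hy hz)).
  repeat split; nra.
Qed.

(* [w <= 1 + u <= (1 + s)^2], [1 + s <= 1 + u <= w^2], and [1 + u <= 5 w / 4]
   since [(w - 2)^2 >= 0]. *)
Lemma ln_root_bounds (s u w : R) : 0 <= s -> s <= u -> 1 + u <= (1 + s) ^ 2 ->
  0 < w -> w * w = u * w + 1 ->
  2 * ln w / 4 <= ln (1 + s) /\ ln (1 + s) <= 2 * ln w /\
  ln (1 + s) <= 2 * ln w / 2 + ln (5 / 4).
Proof.
  intros hs hsu hus hw hwu.
  assert (hw1 : 1 <= w) by nra.
  assert (hwu1 : w <= 1 + u) by nra.
  assert (hu5 : 1 + u <= 5 / 4 * w) by (pose proof (pow2_ge_0 (w - 2)); nra).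
  pose proof (ln_le w ((1 + s) * (1 + s)) hw ltac:(nra)).
  pose proof (ln_le (1 + s) (w * w) ltac:(lra) ltac:(nra)).
  pose proof (ln_le (1 + s) (5 / 4 * w) ltac:(lra) ltac:(lra)).
  rewrite ln_mult in * by lra.
  lra.
Qed.

Lemma tauH_rhoH_bounds n x y : (1 <= n)%nat -> inH n x -> inH n y ->
  rhoH n x y / 4 <= tauH n x y /\ tauH n x y <= rhoH n x y /\
  tauH n x y <= rhoH n x y / 2 + ln (5 / 4).
Proof.
  intros hn hx hy.
  destruct (exists_root_ge1 _ (hyp_ratio_nonneg n x y hx hy)) as [w [hw hwu]].
  destruct (cass_sup_bounds n x y hn hx hy) as [hs [hsu hus]].
  rewrite (rhoH_eq_ln n x y w hx hy ltac:(lra) hwu).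
  exact (ln_root_bounds _ _ w hs hsu hus ltac:(lra) hwu).
Qed.

Lemma cen_inH n c : 0 < c -> inH n (cen n c).
Proof. unfold inH. rewrite lastc_cen. exact (fun h => h). Qed.

Lemma cen_ptneq n a b : (1 <= n)%nat -> a <> b -> ptneq n (cen n a) (cen n b).
Proof.
  intros hn hab. exists (n - 1)%nat. split; [lia|]. unfold cen. rewrite Nat.eqb_refl. exact hab.
Qed.

Lemma hyp_ratio_cen n a b : (1 <= n)%nat ->
  hyp_ratio n (cen n a) (cen n b) = Rabs (a - b) / sqrt (a * b).
Proof. intros hn. unfold hyp_ratio. rewrite edist_cen, !lastc_cen by exact hn. reflexivity. Qed.

(* On a vertical line the Cassinian supremum is attained at the common foot [p = 0]. *)
Lemma tauH_cen n a b : (1 <= n)%nat -> 0 < a -> 0 < b ->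
  tauH n (cen n a) (cen n b) = ln (1 + hyp_ratio n (cen n a) (cen n b)).
Proof.
  intros hn ha hb. pose proof (cen_inH n a ha) as hx. pose proof (cen_inH n b hb) as hy.
  destruct (cass_sup_bounds n _ _ hn hx hy) as [_ [hsu _]].
  destruct (cass_set_lub n _ _ hn hx hy) as [hub _].
  unfold tauH. do 2 f_equal. apply Rle_antisym; [exact hsu|]. apply hub.
  exists (cen n 0). split; [unfold inbdH; apply lastc_cen|].
  rewrite hyp_ratio_cen, !edist_cen, !Rminus_0_r, (Rabs_pos_eq a), (Rabs_pos_eq b) by (lia || lra).
  reflexivity.
Qed.

Lemma tauH_rhoH_equality n : (1 <= n)%nat ->
  tauH n (cen n 2) (cen n (1 / 2)) = rhoH n (cen n 2) (cen n (1 / 2)) / 2 + ln (5 / 4).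
Proof.
  intros hn.
  assert (hu : hyp_ratio n (cen n 2) (cen n (1 / 2)) = 3 / 2).
  { rewrite hyp_ratio_cen by exact hn.
    replace (2 * (1 / 2)) with 1 by field. rewrite sqrt_1, Rabs_pos_eq by lra. field. }
  assert (hrho : rhoH n (cen n 2) (cen n (1 / 2)) = 2 * ln 2)
    by (apply rhoH_eq_ln; [apply cen_inH; lra | apply cen_inH; lra | lra | rewrite hu; lra]).
  rewrite tauH_cen, hu, hrho by (exact hn || lra).
  replace (1 + 3 / 2) with (2 * (5 / 4)) by field. rewrite ln_mult by lra. field.
Qed.

Lemma tauH_cen_sqr n w : (1 <= n)%nat -> 1 < w ->
  tauH n (cen n 1) (cen n (w * w)) = ln (1 + (w * w - 1) / w) /\
  rhoH n (cen n 1) (cen n (w * w)) = 2 * ln w.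
Proof.
  intros hn hw.
  assert (hu : hyp_ratio n (cen n 1) (cen n (w * w)) = (w * w - 1) / w).
  { rewrite hyp_ratio_cen, Rmult_1_l, sqrt_square, Rabs_minus_sym, Rabs_pos_eq by (exact hn || nra).
    reflexivity. }
  split.
  - rewrite tauH_cen, hu by (exact hn || nra). reflexivity.
  - apply rhoH_eq_ln; [apply cen_inH; lra | apply cen_inH; nra | lra | rewrite hu; field; lra].
Qed.

(* [u = (w^2 - 1) / w = d (2 + d) / (1 + d)] for [w = 1 + d], and [ln (1 + u) >= u / (1 + u)],
   [ln w <= d]. *)
Lemma ln_root_ratio_gt (b : R) : 0 < b < 1 ->
  exists w, 1 < w /\ b * (2 * ln w) < ln (1 + (w * w - 1) / w).
Proof.
  intros hb. set (d := (1 - b) / 8). set (w := 1 + d).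
  assert (hd : 0 < d <= 1 / 8) by (unfold d; split; lra).
  assert (hu : (w * w - 1) / w = d * (2 + d) / (1 + d)) by (unfold w; field; lra).
  exists w. split; [unfold w; lra|]. rewrite hu.
  assert (hu0 : 0 < d * (2 + d) / (1 + d)) by (apply Rdiv_lt_0_compat; nra).
  pose proof (ln_ge_div _ hu0) as hln.
  assert (hq : d * (2 + d) / (1 + d) / (1 + d * (2 + d) / (1 + d)) =
               d * (2 + d) / (1 + 3 * d + d * d))
    by (field; nra).
  assert (h2bd : 2 * b * d < d * (2 + d) / (1 + 3 * d + d * d)).
  { apply Rmult_lt_reg_r with (1 + 3 * d + d * d); [nra|].
    replace (d * (2 + d) / (1 + 3 * d + d * d) * (1 + 3 * d + d * d)) with (d * (2 + d))
      by (field; nra).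
    assert (8 * d = 1 - b) by (unfold d; field). nra. }
  pose proof (ln_le_sub1 w ltac:(unfold w; lra)).
  assert (b * ln w <= b * d) by (apply Rmult_le_compat_l; unfold w in *; lra).
  lra.
Qed.

Lemma ratio_set_near_one n b : (1 <= n)%nat -> 0 < b < 1 -> exists r, ratio_set n r /\ b < r.
Proof.
  intros hn hb. destruct (ln_root_ratio_gt b hb) as [w [hw hlt]].
  destruct (tauH_cen_sqr n w hn hw) as [htau hrho].
  pose proof (ln_pos w hw).
  exists (tauH n (cen n 1) (cen n (w * w)) / rhoH n (cen n 1) (cen n (w * w))). split.
  - exists (cen n 1), (cen n (w * w)).
    repeat split; [apply cen_inH; lra | apply cen_inH; nra | apply cen_ptneq; [lia | nra]].
  - rewrite htau, hrho. apply Rmult_lt_reg_r with (2 * ln w); [lra|].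
    unfold Rdiv. rewrite Rmult_assoc, Rinv_l, Rmult_1_r by lra. exact hlt.
Qed.

Definition shifted_unit (n : nat) (d : R) : pt := fun i => if Nat.eqb i 0 then d else cen n 1 i.

Lemma cen_first n c : (2 <= n)%nat -> cen n c 0%nat = 0.
Proof.
  intros hn. unfold cen.
  replace (Nat.eqb 0 (n - 1)) with false by (symmetry; apply Nat.eqb_neq; lia). reflexivity.
Qed.

Lemma lastc_shifted_unit n d : (2 <= n)%nat -> lastc n (shifted_unit n d) = 1.
Proof.
  intros hn. unfold lastc, shifted_unit.
  replace (Nat.eqb (n - 1) 0) with false by (symmetry; apply Nat.eqb_neq; lia). apply lastc_cen.
Qed.

Lemma edist_shifted_unit n d : (2 <= n)%nat -> edist n (cen n 1) (shifted_unit n d) = Rabs d.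
Proof.
  intros hn. unfold edist.
  rewrite (sumR_eq_term n _ 0%nat) by
    (lia || (intros i _ hi; unfold shifted_unit; apply Nat.eqb_neq in hi; rewrite hi; ring)).
  unfold shifted_unit. simpl Nat.eqb. cbv iota.
  rewrite cen_first, Rminus_0_l, <- pow2_abs, Rabs_Ropp by exact hn.
  apply sqrt_pow2, Rabs_pos.
Qed.

(* Both distances are [>= 1] (height 1) and [|x - p| >= p_1], [|y - p| >= d - p_1];
   then [(|x - p| - 1) (|y - p| - 1) >= 0]. *)
Lemma shifted_unit_foot_prod n d p : (2 <= n)%nat -> inbdH n p ->
  d - 1 <= edist n (cen n 1) p * edist n (shifted_unit n d) p.
Proof.
  intros hn hp. unfold inbdH, lastc in hp.
  set (al := edist n (cen n 1) p). set (be := edist n (shifted_unit n d) p).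
  assert (hal0 : 0 <= al) by apply sqrt_pos.
  assert (hbe0 : 0 <= be) by apply sqrt_pos.
  pose proof (sqr_le_edist_sqr n (cen n 1) p 0 ltac:(lia)) as h0x.
  pose proof (sqr_le_edist_sqr n (cen n 1) p (n - 1) ltac:(lia)) as hnx.
  pose proof (sqr_le_edist_sqr n (shifted_unit n d) p 0 ltac:(lia)) as h0y.
  pose proof (sqr_le_edist_sqr n (shifted_unit n d) p (n - 1) ltac:(lia)) as hny.
  rewrite cen_first in h0x by exact hn.
  pose proof (lastc_shifted_unit n d hn) as hy. pose proof (lastc_cen n 1) as hx.
  unfold lastc in hx, hy. rewrite hx, hp in hnx. rewrite hy, hp in hny.
  fold al in h0x, hnx. fold be in h0y, hny.
  replace (shifted_unit n d 0%nat) with d in h0y by reflexivity.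
  rewrite Rminus_0_r, pow1 in hnx, hny. rewrite Rminus_0_l in h0x.
  assert (1 <= al) by nra. assert (1 <= be) by nra.
  assert (p 0%nat <= al) by nra. assert (d - p 0%nat <= be) by nra.
  nra.
Qed.

Lemma horizontal_pair_bounds n v : (2 <= n)%nat -> 2 <= v ->
  tauH n (cen n 1) (shifted_unit n (v * v + 1)) <= ln 2 + ln v /\
  4 * ln v <= rhoH n (cen n 1) (shifted_unit n (v * v + 1)).
Proof.
  intros hn hv. set (d := v * v + 1). set (x := cen n 1). set (y := shifted_unit n d).
  assert (hx : inH n x) by (apply cen_inH; lra).
  assert (hy : inH n y) by (unfold inH, y; rewrite lastc_shifted_unit by exact hn; lra).
  assert (hxy : edist n x y = d)
    by (unfold x, y; rewrite edist_shifted_unit, Rabs_pos_eq by (exact hn || unfold d; nra);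
        reflexivity).
  split.
  - assert (hs : supR (cass_set n x y) <= d / v).
    { destruct (cass_set_lub n x y ltac:(lia) hx hy) as [_ hleast]. apply hleast.
      intros e [p [hp ->]]. rewrite hxy.
      pose proof (shifted_unit_foot_prod n d p hn hp) as hprod. fold x y in hprod.
      assert (v <= sqrt (edist n x p * edist n y p))
        by (rewrite <- (sqrt_square v) by lra; apply sqrt_le_1_alt; unfold d in hprod; lra).
      apply Rmult_le_compat_l; [unfold d; nra|]. apply Rinv_le_contravar; lra. }
    assert (hdv : d / v <= 2 * v - 1)
      by (apply Rmult_le_reg_r with v; [lra|]; unfold Rdiv; rewrite Rmult_assoc, Rinv_l by lra;
          unfold d; nra).
    destruct (cass_sup_bounds n x y ltac:(lia) hx hy) as [hs0 _].
    unfold tauH. rewrite <- ln_mult by lra. apply ln_le; lra.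
  - assert (hu : hyp_ratio n x y = d)
      by (unfold hyp_ratio; rewrite hxy; unfold x, y;
          rewrite lastc_shifted_unit, lastc_cen, Rmult_1_l, sqrt_1 by exact hn; field).
    destruct (exists_root_ge1 d ltac:(unfold d; nra)) as [w [hw hwd]].
    rewrite (rhoH_eq_ln n x y w hx hy ltac:(lra) ltac:(rewrite hu; exact hwd)).
    assert (ln (v * v) <= ln w) by (apply ln_le; [nra | unfold d in hwd; nra]).
    rewrite ln_mult in * by lra. lra.
Qed.

Lemma exists_ln_ratio_lt (B : R) : 1 / 4 < B -> exists v, 2 <= v /\ ln 2 + ln v < B * (4 * ln v).
Proof.
  intros hB. pose proof (ln_pos 2 ltac:(lra)) as hl2.
  set (L := ln 2 + ln 2 / (4 * B - 1)).
  assert (hL : 0 < ln 2 / (4 * B - 1)) by (apply Rdiv_lt_0_compat; lra).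
  assert (hLB : ln 2 < (4 * B - 1) * L).
  { unfold L. replace ((4 * B - 1) * (ln 2 + ln 2 / (4 * B - 1))) with ((4 * B - 1) * ln 2 + ln 2)
      by (field; lra).
    pose proof (Rmult_lt_0_compat (4 * B - 1) (ln 2) ltac:(lra) hl2). lra. }
  exists (exp L). rewrite ln_exp. split; [|lra].
  rewrite <- (exp_ln 2) by lra. left. apply exp_increasing. unfold L. lra.
Qed.

Lemma ratio_set_near_quarter n B : (2 <= n)%nat -> 1 / 4 < B -> exists r, ratio_set n r /\ r < B.
Proof.
  intros hn hB. destruct (exists_ln_ratio_lt B hB) as [v [hv hlt]].
  destruct (horizontal_pair_bounds n v hn hv) as [htau hrho].
  set (x := cen n 1) in *. set (y := shifted_unit n (v * v + 1)) in *.
  pose proof (ln_pos v ltac:(lra)).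
  exists (tauH n x y / rhoH n x y). split.
  - exists x, y. repeat split.
    + apply cen_inH. lra.
    + unfold inH, y. rewrite lastc_shifted_unit by exact hn. lra.
    + exists 0%nat. split; [lia|]. unfold x, y, shifted_unit. simpl Nat.eqb. cbv iota.
      rewrite cen_first by exact hn. nra.
  - apply Rmult_lt_reg_r with (rhoH n x y); [lra|].
    unfold Rdiv. rewrite Rmult_assoc, Rinv_l by lra. nra.
Qed.

Lemma ratio_set_bounds n r : (1 <= n)%nat -> ratio_set n r -> 1 / 4 <= r <= 1.
Proof.
  intros hn [x [y [hx [hy [hxy ->]]]]].
  pose proof (rhoH_pos n x y hx hy hxy).
  destruct (tauH_rhoH_bounds n x y hn hx hy) as [hlo [hhi _]].
  assert (hcancel : tauH n x y / rhoH n x y * rhoH n x y = tauH n x y) by (field; lra).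
  split; apply Rmult_le_reg_r with (rhoH n x y); lra.
Qed.

Theorem theorem4p2 (n : nat) (hn : (2 <= n)%nat) :
  (forall x y : pt, inH n x -> inH n y ->
     rhoH n x y / 4 <= tauH n x y /\
     tauH n x y <= rhoH n x y /\
     tauH n x y <= rhoH n x y / 2 + ln (5 / 4)) /\
  is_glb (ratio_set n) (1 / 4) /\
  is_lub (ratio_set n) 1 /\
  tauH n (cen n 2) (cen n (1 / 2)) = rhoH n (cen n 2) (cen n (1 / 2)) / 2 + ln (5 / 4).
Proof.
  assert (hn1 : (1 <= n)%nat) by lia.
  split; [intros x y; apply tauH_rhoH_bounds; exact hn1|].
  split; [|split].
  - split; [intros r hr; apply (ratio_set_bounds n r hn1 hr)|].
    intros B hB. apply Rnot_lt_le. intros hlt.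
    destruct (ratio_set_near_quarter n B hn hlt) as [r [hr hrB]]. specialize (hB r hr). lra.
  - split; [intros r hr; apply (ratio_set_bounds n r hn1 hr)|].
    intros B hB. apply Rnot_lt_le. intros hlt.
    destruct (ratio_set_near_one n (Rmax B (1 / 2)) hn1) as [r [hr hrB]].
    + split; [apply Rlt_le_trans with (1 / 2); [lra | apply Rmax_r] | apply Rmax_lub_lt; lra].
    + specialize (hB r hr). pose proof (Rmax_l B (1 / 2)). lra.
  - exact (tauH_rhoH_equality n hn1).
Qed.
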